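(* For $n\in\mathbb{N}$: (1) if $n\in\{1,2\}$ then $c(n)=\lceil\log_2 n\rceil+1$ and $h(n)=\lceil\log_2 n\rceil$; (2) if $n\ge3$ then $c(n)\le\lceil\log_2 n\rceil$ and $h(n)\le\lceil\log_2 n\rceil-1$, and equality holds for infinitely many $n\ge 3$.
   Context: For $i\in\mathbb{N}$, $m\in\mathbb{N}_0$ let $d_i(m)=2^{i-1}-|(m\bmod 2^i)-2^{i-1}|$, and let $c(n)$ be the number of distinct values in $\{d_i(n):i\in\mathbb{N}\}$. For $k\ge0$, $0\le m<2^k$ let $\beta_k(m)\in\{0,1\}^k$ have $j$-th coordinate equal to the binary digit of $m$ of weight $2^{k-j}$. For $n\ge2$, $k=\lceil\log_2 n\rceil$, a pair $(n_0,n_1)$ with $n=n_0+n_1$, $n_0\ge n_1\ge1$ is a hypercubic bipartition (HCBP) of $n$ if for some $i\in\{1,\dots,k\}$ the hyperplane $x_i=1/2$ splits $\beta_k(0),\dots,\beta_k(n-1)$ into $n_0$ points on one side and $n_1$ on the other. For $n\ge2$, $h(n)$ is the number of HCBPs of $n$; $h(1)=0$. *)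

From mathcomp Require Import all_boot.
Set Implicit Arguments. Unset Strict Implicit. Unset Printing Implicit Defensive.

(* |a - b| on naturals (exact: one of the two truncated differences is 0). *)
Definition absdiff (a b : nat) : nat := (a - b) + (b - a).

Definition d (i m : nat) : nat := 2 ^ i.-1 - absdiff (m %% 2 ^ i) (2 ^ i.-1).

(* c(n) = number of distinct values of d_i(n), i >= 1.
   For i >= n+1 one has d_i(n) = n = d_(n+1)(n), so the indices 1..n+1
   already produce every value (see lemma d_in_range below). *)
Definition c (n : nat) : nat := size (undup [seq d i n | i <- iota 1 n.+1]).

Lemma d_large (i n : nat) : n.+1 <= i -> d i n = n.
Proof.
move=> hi.
have h1 : n < 2 ^ i.-1.
  apply: (leq_trans (ltn_expl n (leqnn 2))).
  by rewrite leq_exp2l // -ltnS prednK // (leq_trans _ hi).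
have h2 : n < 2 ^ i.
  apply: (leq_trans h1); rewrite leq_exp2l //; exact: leq_pred.
rewrite /d modn_small // /absdiff.
have -> : n - 2 ^ i.-1 = 0 by apply/eqP; rewrite subn_eq0 ltnW.
by rewrite add0n subKn // ltnW.
Qed.

Lemma d_in_range (n i : nat) : 1 <= i ->
  d i n \in [seq d j n | j <- iota 1 n.+1].
Proof.
move=> hi; case: (leqP i n.+1) => hin.
  apply/mapP; exists i => //.
  by rewrite mem_iota hi /= add1n ltnS.
rewrite d_large; last exact: ltnW.
apply/mapP; exists n.+1; last by rewrite d_large.
by rewrite mem_iota /= add1n ltnS.
Qed.

Definition beta (k m j : nat) : bool := odd (m %/ 2 ^ (k - j)).

(* number of the points beta_k(0),...,beta_k(n-1) with coordinate j equal to 1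
   (i.e. on the side x_j > 1/2 of the hyperplane x_j = 1/2) *)
Definition side1 (k n j : nat) : nat := count (fun m => beta k m j) (iota 0 n).

Definition HCBP (n n0 n1 : nat) : bool :=
  let k := up_log 2 n in
  [&& n0 + n1 == n, n1 <= n0, 0 < n1 &
      has (fun j => let s := side1 k n j in
                    ((s == n0) && (n - s == n1)) || ((s == n1) && (n - s == n0)))
          (iota 1 k)].

Definition h (n : nat) : nat :=
  if n < 2 then 0
  else size [seq p <- [seq (a, b) | a <- iota 0 n.+1, b <- iota 0 n.+1]
            | HCBP n p.1 p.2].

From mathcomp Require Import all_boot zify.
Set Implicit Arguments. Unset Strict Implicit. Unset Printing Implicit Defensive.

(* d_i(n) is the distance from n to the nearest multiple of 2^i, and n - d_i(n)
   is twice the number of m < n whose binary digit of weight 2^(i-1) is 1.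
   Hence the hyperplane x_j = 1/2 cuts the points beta_k(0..n-1) into two parts
   differing by d_(k-j+1)(n): the HCBPs of n correspond to the distinct values
   among d_1(n), ..., d_k(n), and c(n) counts these together with the value
   n = d_i(n) taken for i > k.  For n >= 3 either d_1(n) = d_2(n), or
   n = 2 mod 4 and d_2(n) = d_3(n), which gives the bounds.
   For n = 1 + 4 + ... + 4^j (binary 1010...01) one has d_1 = d_2 = 1 and
   3 d_i = 2^i -/+ 1 for i >= 2, a strictly increasing sequence, so the bounds
   are attained. *)

Lemma dE i m : 0 < i -> d i m = minn (m %% 2 ^ i) (2 ^ i - m %% 2 ^ i).
Proof.
move=> i_gt0; have r_lt := ltn_pmod m (expn_gt0 2 i).
rewrite /d /absdiff; move: r_lt; rewrite -(prednK i_gt0) expnS.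
set r := m %% _; set P := 2 ^ i.-1; lia.
Qed.

Lemma d12_or_d23 n : d 1 n = d 2 n \/ n %% 4 = 2 /\ d 2 n = d 3 n.
Proof. rewrite !dE //=; lia. Qed.

Lemma odd_divn m n : 0 < m -> odd (n %/ m) = (m <= n %% (2 * m)).
Proof.
move=> m_gt0; have := modn_divl n 2 m; rewrite modn2.
have r_lt : n %% (2 * m) < 2 * m by rewrite ltn_pmod ?muln_gt0.
have := ltn_divLR (n %% (2 * m)) 2 m_gt0.
have := leq_divRL 1 (n %% (2 * m)) m_gt0.
rewrite mul1n; move: r_lt; set r := n %% _.
by case: (odd _); case: leqP; lia.
Qed.

Lemma double_count_odd_div_add_d b n :
  2 * count (fun m => odd (m %/ 2 ^ b)) (iota 0 n) + d b.+1 n = n.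
Proof.
have M_gt0 : 0 < 2 ^ b := expn_gt0 2 b.
elim: n => [|n IHn]; first by rewrite dE // mod0n min0n.
move: IHn; rewrite -[n.+1]addn1 iotaD count_cat /= add0n addn0.
rewrite !dE // expnS odd_divn //.
have r_lt : n %% (2 * 2 ^ b) < 2 * 2 ^ b by rewrite ltn_pmod ?muln_gt0.
rewrite -modnDml; move: r_lt; set M := 2 ^ b; set r := n %% _.
have [r1_eq | r1_ne] := eqVneq (r + 1) (2 * M).
  by rewrite r1_eq modnn; lia.
rewrite modn_small; lia.
Qed.

Definition dvals n := [seq d i n | i <- iota 1 (up_log 2 n)].

Lemma d_id i n : 0 < i -> n <= 2 ^ i.-1 -> d i n = n.
Proof.
move=> i_gt0 n_le; have e : 2 ^ i = 2 * 2 ^ i.-1 by rewrite -expnS prednK.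
rewrite dE // e modn_small; lia.
Qed.

Lemma dvals_lt n x : 1 < n -> x \in dvals n -> x < n.
Proof.
move=> n_gt1 /mapP [i]; rewrite mem_iota => /andP [i_gt0 i_le] ->.
apply: leq_ltn_trans (leq_subr _ _) _.
apply: leq_ltn_trans (up_log_gtn (leqnn 2) n_gt1).
rewrite leq_exp2l //; lia.
Qed.

Lemma c_dvals n : 1 < n -> c n = (size (undup (dvals n))).+1.
Proof.
move=> n_gt1; have k_le : up_log 2 n <= n.
  exact: up_log_min (ltnW (ltn_expl n (leqnn 2))).
have n_notin : n \notin dvals n.
  by apply/negP => /(dvals_lt n_gt1); rewrite ltnn.
rewrite /c (perm_size (perm_undup (s2 := n :: dvals n) _)).
  by rewrite /= (negbTE n_notin).
move=> x; rewrite [RHS]inE; apply/mapP/predU1P => [[i] | [-> | /mapP [i]]].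
- rewrite mem_iota => /andP [i_gt0 i_le] ->.
  have [i_le_k | k_lt_i] := leqP i (up_log 2 n); [right | left].
    by apply: map_f; rewrite mem_iota; lia.
  apply: d_id => //; apply: leq_trans (up_logP n (leqnn 2)) _.
  by rewrite leq_exp2l //; lia.
- by exists n.+1; [rewrite mem_iota; lia | rewrite d_large].
- by rewrite mem_iota => i_in ->; exists i => //; rewrite mem_iota; lia.
Qed.

Lemma double_side1_add_d k n j : 2 * side1 k n j + d (k - j).+1 n = n.
Proof. exact: double_count_odd_div_add_d. Qed.

Lemma HCBPE n a b :
  HCBP n a b = [&& a + b == n, b <= a, 0 < b & a - b \in dvals n].
Proof.
rewrite /HCBP; have [ab_n | //] := eqVneq (a + b) n.
have [b_le_a | //] := leqP b a.
rewrite /=; congr (_ && _); apply/hasP/mapP => [[j] | [i]]; rewrite mem_iota.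
- move=> j_in /orP [] /andP [/eqP s_eq /eqP s_eq']; exists (up_log 2 n - j).+1;
    rewrite ?mem_iota; have := double_side1_add_d (up_log 2 n) n j; lia.
- move=> i_in ab_d; exists (up_log 2 n - i).+1; first by rewrite mem_iota; lia.
  have := double_side1_add_d (up_log 2 n) n (up_log 2 n - i).+1.
  have -> : (up_log 2 n - (up_log 2 n - i).+1).+1 = i by lia.
  by move=> side_eq; apply/orP; right; apply/andP; split; apply/eqP; lia.
Qed.

Lemma dvals_double_add n x : x \in dvals n -> exists s, 2 * s + x = n.
Proof.
case/mapP => i; rewrite mem_iota => /andP [i_gt0 _] ->.
have := double_count_odd_div_add_d i.-1 n; rewrite (prednK i_gt0).
by eexists; eassumption.
Qed.

Lemma h_dvals n : 1 < n -> h n = size (undup (dvals n)).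
Proof.
move=> n_gt1; rewrite /h ifN -?leqNgt //; set L := filter _ _.
have L_uniq : uniq L.
  rewrite filter_uniq //; apply: allpairs_uniq; rewrite ?iota_uniq //.
  by move=> [a b] [a' b'] _ _ /= [-> ->].
have diff_inj : {in L &, injective (fun p => p.1 - p.2)}.
  move=> [a b] [a' b']; rewrite !mem_filter /= !HCBPE.
  case/andP => /and4P [/eqP ab ba _ _] _ /andP [/and4P [/eqP ab' ba' _ _] _].
  by move=> diff_eq; congr (_, _); lia.
rewrite -(size_map (fun p => p.1 - p.2)); apply/perm_size/uniq_perm.
- by rewrite map_inj_in_uniq.
- exact: undup_uniq.
move=> x; rewrite mem_undup; apply/mapP/idP => [[[a b]] | x_in].
  by rewrite mem_filter HCBPE => /andP [/and4P [_ _ _ ?] _] ->.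
have [s ns] := dvals_double_add x_in; have x_lt := dvals_lt n_gt1 x_in.
exists (n - s, s); last by rewrite /=; lia.
rewrite mem_filter HCBPE; apply/andP; split.
  apply/and4P; split; rewrite /=; [apply/eqP; lia | lia | lia |].
  by have -> : n - s - s = x by lia.
by apply/allpairsP; exists (n - s, s); rewrite !mem_iota /=; split => //; lia.
Qed.

Lemma size_undup_map_lt (T U : eqType) (f : T -> U) s p q :
  uniq s -> p \in s -> q \in s -> p != q -> f p = f q ->
  size (undup (map f s)) < size s.
Proof.
move=> s_uniq p_in q_in p_neq_q fpq.
have sub : {subset undup (map f s) <= map f (rem q s)}.
  move=> _ /[!mem_undup] /mapP [i i_in ->].
  have [-> | i_neq_q] := eqVneq i q.
    by rewrite -fpq map_f // mem_rem_uniq // inE p_neq_q.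
  by rewrite map_f // mem_rem_uniq // inE i_neq_q.
apply: leq_ltn_trans (uniq_leq_size (undup_uniq _) sub) _.
by rewrite size_map size_rem //; case: (s) q_in.
Qed.

Lemma size_undup_dvals_lt n : 2 < n -> size (undup (dvals n)) < up_log 2 n.
Proof.
move=> n_gt2; have k_hi := up_logP n (leqnn 2).
have k_gt m : 2 ^ m < n -> m < up_log 2 n.
  move=> m_lt; rewrite ltnNge; apply/negP => k_le.
  by have := leq_trans k_hi (leq_pexp2l (isT : 0 < 2) k_le); lia.
rewrite /dvals -[X in _ < X](size_iota 1).
have [d12 | [n_mod4 d23]] := d12_or_d23 n.
  have k_gt1 := k_gt 1 n_gt2.
  by apply: (size_undup_map_lt (p := 1) (q := 2));
    rewrite ?iota_uniq ?mem_iota //; lia.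
have k_gt2 : 2 < up_log 2 n by apply: k_gt; rewrite /=; lia.
by apply: (size_undup_map_lt (p := 2) (q := 3));
  rewrite ?iota_uniq ?mem_iota //; lia.
Qed.

Fixpoint repunit4 t := if t is t'.+1 then 4 * repunit4 t' + 1 else 1.

Lemma repunit4E t : 3 * repunit4 t + 1 = 2 ^ t.*2.+2.
Proof. by elim: t => [//|t IH]; rewrite /= doubleS expnS expnS -IH; lia. Qed.

Lemma ltn_repunit4 j : j < repunit4 j.
Proof. by elim: j => [//|j IH] /=; lia. Qed.

Lemma repunit4D a b :
  repunit4 (a + b).+1 = repunit4 a + 2 ^ a.*2.+2 * repunit4 b.
Proof.
elim: a => [|a IH]; first by rewrite /= addn1 mulnC.
by rewrite addSn -[LHS]/(4 * repunit4 (a + b).+1 + 1) IH /= doubleS !expnS; lia.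
Qed.

Lemma repunit4_mod t j : t <= j -> repunit4 j %% 2 ^ t.*2.+2 = repunit4 t.
Proof.
have F_lt : repunit4 t < 2 ^ t.*2.+2 by rewrite -repunit4E; lia.
rewrite leq_eqVlt => /orP [/eqP <- | /subnKC <-]; first exact: modn_small.
by rewrite addSn repunit4D addnC mulnC modnMDl modn_small.
Qed.

(* 3 d_i = 2^i + (-1)^(i+1), stated without subtraction. *)
Lemma d_repunit4 i j :
  0 < i <= j.*2.+2 -> 3 * d i (repunit4 j) + ~~ odd i = 2 ^ i + odd i.
Proof.
case/andP => i_gt0 i_le.
have [t [t_le_j i_eq]] : exists t, t <= j /\ (i = t.*2.+1 \/ i = t.*2.+2).
  exists i.-1./2; have := odd_double_half i.-1; set u := i.-1./2.
  by case: (odd _) => /=; lia.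
have i_le_t : i <= t.*2.+2 by lia.
have F_mod : repunit4 j %% 2 ^ i = repunit4 t.
  rewrite -(modn_dvdm _ (_ : 2 ^ i %| 2 ^ t.*2.+2)); last by rewrite dvdn_exp2l.
  rewrite repunit4_mod // modn_small //; have := repunit4E t.
  by case: i_eq => ->; rewrite !expnS; lia.
rewrite dE // F_mod; have := repunit4E t.
by case: i_eq => -> /=; rewrite ?odd_double /= !expnS; lia.
Qed.

Lemma d_repunit4_lt i j :
  1 < i -> i < j.*2.+2 -> d i (repunit4 j) < d i.+1 (repunit4 j).
Proof.
move=> i_gt1 i_lt; have pow_ge4 : 2 ^ 2 <= 2 ^ i by rewrite leq_exp2l.
have := @d_repunit4 i j; have := @d_repunit4 i.+1 j; rewrite /= expnS.
by case: (odd i) => /=; lia.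
Qed.

Lemma up_log_repunit4 j : 0 < j -> up_log 2 (repunit4 j) = j.*2.+1.
Proof.
move=> j_gt0; have pow_ge4 : 2 ^ 2 <= 2 ^ j.*2 by rewrite leq_exp2l; lia.
apply: up_log_eq => //; have := repunit4E j; rewrite !expnS; lia.
Qed.

Lemma size_undup_dvals_repunit4 j :
  0 < j -> size (undup (dvals (repunit4 j))) = j.*2.
Proof.
move=> j_gt0; rewrite /dvals up_log_repunit4 //.
rewrite -[iota 1 _]/(1 :: iota 2 j.*2) map_cons /=.
have d1_d2 : d 1 (repunit4 j) = d 2 (repunit4 j).
  have := d_repunit4 (i := 1) (j := j) isT.
  by have := d_repunit4 (i := 2) (j := j) isT; lia.
rewrite ifT; last by rewrite d1_d2; apply: map_f; rewrite mem_iota; lia.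
have d_homo : {in iota 2 j.*2 &, {homo d^~ (repunit4 j) : a b / a < b}}.
  apply: homo_ltn_in; first exact: ltn_trans.
    by move=> a b + + c; rewrite !mem_iota; lia.
  by move=> a; rewrite !mem_iota => a_in a1_in; apply: d_repunit4_lt; lia.
rewrite undup_id ?size_map ?size_iota // map_inj_in_uniq ?iota_uniq //.
exact/incn_inj_in/leq_mono_in.
Qed.

Theorem mainTheorem12 :
  (forall n : nat, 1 <= n <= 2 ->
     c n = up_log 2 n + 1 /\ h n = up_log 2 n) /\
  (forall n : nat, 3 <= n ->
     c n <= up_log 2 n /\ h n <= up_log 2 n - 1) /\
  (forall N : nat, exists n : nat,
     [/\ N <= n, 3 <= n, c n = up_log 2 n & h n = up_log 2 n - 1]).
Proof.
split; [|split].
- move=> n /andP [n_gt0 n_le2].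
  by have [-> | ->] : n = 1 \/ n = 2 by [lia]; split; vm_compute.
- move=> n n_gt2; have n_gt1 := ltnW n_gt2.
  by rewrite c_dvals // h_dvals //; have := size_undup_dvals_lt n_gt2; lia.
- move=> N; have F_gt2 : 2 < repunit4 N.+1.
    by rewrite /=; have := ltn_repunit4 N; lia.
  exists (repunit4 N.+1); have := ltn_repunit4 N.+1.
  rewrite c_dvals ?h_dvals ?(ltnW F_gt2) //.
  rewrite size_undup_dvals_repunit4 ?up_log_repunit4 //.
  by split; lia.
Qed.
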